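(* Let $\mathcal H=\mathbb C^d$ with orthonormal basis $\{|k\rangle\}_{k=1}^d$, $d<\infty$. Let $\mathsf{MultiPCov}$ be the monoid of multiphase covariant channels and $\mathsf{BPres}$ the monoid of basis-preserving channels on $M_d(\mathbb C)$. Then, with commutants taken inside the set of all quantum channels on $M_d(\mathbb C)$, $\mathsf{MultiPCov}'=\mathsf{BPres}$ and $\mathsf{BPres}'=\mathsf{MultiPCov}$.
   Context: For $\boldsymbol\theta=(\theta_1,\dots,\theta_d)\in[0,2\pi)^d$ let $U_{\boldsymbol\theta}=\sum_k e^{i\theta_k}|k\rangle\langle k|$ and $\mathcal U_{\boldsymbol\theta}=U_{\boldsymbol\theta}\cdot U_{\boldsymbol\theta}^\dagger$. A quantum channel $\mathcal M$ is multiphase covariant if $\mathcal U_{\boldsymbol\theta}\circ\mathcal M=\mathcal M\circ\mathcal U_{\boldsymbol\theta}$ for all $\boldsymbol\theta$. A channel $\mathcal B$ is basis-preserving if $\mathcal B(|k\rangle\langle k|)=|k\rangle\langle k|$ for all $k$. The commutant of a set of channels is the set of channels commuting under composition with each of its elements. *)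

(* The complex field is modelled by an arbitrary
   numClosedFieldType C (e.g. algC, or C itself). *)
From HB Require Import structures.
From mathcomp Require Import all_boot all_order all_algebra.
Set Implicit Arguments. Unset Strict Implicit. Unset Printing Implicit Defensive.
Import Order.TTheory GRing.Theory Num.Theory.
Local Open Scope ring_scope.

Section QChannels.
Variables (C : numClosedFieldType) (d : nat).

Definition adjmx (m n : nat) (A : 'M[C]_(m, n)) : 'M[C]_(n, m) :=
  (map_mx (fun z : C => z^*) A)^T.

Definition block_psd (n : nat) (X : 'I_n -> 'I_n -> 'M[C]_d) : Prop :=
  forall v : 'I_n -> 'cV[C]_d,
    0 <= \sum_(i < n) \sum_(j < n) (adjmx (v i) *m X i j *m v j) 0 0.

Definition is_linear_map (M : 'M[C]_d -> 'M[C]_d) : Prop :=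
  forall (a : C) (A B : 'M[C]_d), M (a *: A + B) = a *: M A + M B.

(* complete positivity: id_n (x) M maps PSD to PSD for every n *)
Definition completely_positive (M : 'M[C]_d -> 'M[C]_d) : Prop :=
  forall (n : nat) (X : 'I_n -> 'I_n -> 'M[C]_d),
    block_psd X -> block_psd (fun i j => M (X i j)).

Definition trace_preserving (M : 'M[C]_d -> 'M[C]_d) : Prop :=
  forall A : 'M[C]_d, \tr (M A) = \tr A.

Definition quantum_channel (M : 'M[C]_d -> 'M[C]_d) : Prop :=
  [/\ is_linear_map M, completely_positive M & trace_preserving M].

(* U_theta, parameterised by the phases e^{i theta_k} (unit-modulus scalars) *)
Definition phase_unitary (ph : 'I_d -> C) : 'M[C]_d := diag_mx (\row_k ph k).

Definition unitary_conj (ph : 'I_d -> C) (A : 'M[C]_d) : 'M[C]_d :=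
  phase_unitary ph *m A *m adjmx (phase_unitary ph).

Definition channels_commute (M N : 'M[C]_d -> 'M[C]_d) : Prop :=
  forall A, M (N A) = N (M A).

Definition multiphase_covariant (M : 'M[C]_d -> 'M[C]_d) : Prop :=
  quantum_channel M /\
  forall ph : 'I_d -> C, (forall k, `|ph k| = 1) ->
    channels_commute (unitary_conj ph) M.

Definition basis_preserving (M : 'M[C]_d -> 'M[C]_d) : Prop :=
  quantum_channel M /\ forall k : 'I_d, M (delta_mx k k) = delta_mx k k.

Definition commutant (S : ('M[C]_d -> 'M[C]_d) -> Prop)
    (N : 'M[C]_d -> 'M[C]_d) : Prop :=
  quantum_channel N /\ forall M, S M -> channels_commute M N.

End QChannels.

From HB Require Import structures.
From mathcomp Require Import all_boot all_order all_algebra.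
From mathcomp Require Import ring.
Set Implicit Arguments. Unset Strict Implicit. Unset Printing Implicit Defensive.
Import Order.TTheory GRing.Theory Num.Theory.
Local Open Scope ring_scope.

(** A basis-preserving channel B acts on the matrix units E_ij as a Schur
    multiplier: complete positivity applied to the positive 2x2 block
    [E_ii E_ij; E_ji E_jj] forces B(E_ij) to be a multiple of E_ij for i <> j,
    while B fixes every diagonal matrix.  A multiphase covariant channel M also
    maps E_ij (i <> j) to a multiple of E_ij and E_kk to a diagonal matrix,
    because suitable phases separate the index pairs.  Channels of these two
    shapes commute.  Conversely, the phase conjugations are basis-preserving,
    so the commutant of BPres is covariant; and the replacement channels
    A |-> tr(A) E_kk are covariant, so a trace-preserving channel commuting
    with them fixes every E_kk. *)

Section Channels.
Variables (C : numClosedFieldType) (d : nat).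
Implicit Types (A X : 'M[C]_d) (u v : 'cV[C]_d) (ph : 'I_d -> C).
Local Notation E := (@delta_mx C d d).
Local Notation form u X v := ((adjmx u *m X *m v) 0 0).

Lemma formE u X v : form u X v = \sum_a \sum_b (u a 0)^* * X a b * v b 0.
Proof.
rewrite mxE exchange_big /=; apply: eq_bigr => b _.
by rewrite mxE mulr_suml; apply: eq_bigr => a _; rewrite !mxE.
Qed.

Lemma form_delta u v a b : form u (E a b) v = (u a 0)^* * v b 0.
Proof.
rewrite formE (bigD1 a) //= [X in _ + X]big1 ?addr0 => [|x xa]; last first.
  by apply: big1 => y _; rewrite mxE (negbTE xa) mulr0 mul0r.
rewrite (bigD1 b) //= [X in _ + X]big1 ?addr0 => [|y yb].
  by rewrite mxE !eqxx mulr1.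
by rewrite mxE (negbTE yb) andbF mulr0 mul0r.
Qed.

Lemma formZ u v s X : form u (s *: X) v = s * form u X v.
Proof. by rewrite -scalemxAr -scalemxAl mxE. Qed.

Lemma form_scaled_delta (s t : C) a b X :
  form (s *: delta_mx a (0 : 'I_1)) X (t *: delta_mx b (0 : 'I_1)) = s^* * X a b * t.
Proof.
rewrite formE (bigD1 a) //= [X in _ + X]big1 ?addr0 => [|x xa]; last first.
  by apply: big1 => y _; rewrite !mxE (negbTE xa) mulr0 rmorph0 !mul0r.
rewrite (bigD1 b) //= [X in _ + X]big1 ?addr0 => [|y yb].
  by rewrite !mxE !eqxx !mulr1.
by rewrite !mxE (negbTE yb) !mulr0.
Qed.

Section LinearMap.
Variable N : 'M[C]_d -> 'M[C]_d.
Hypothesis linN : is_linear_map N.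

HB.instance Definition _ :=
  GRing.isLinear.Build C 'M[C]_d 'M[C]_d *:%R N (fun a A B => linN a A B).

Lemma linear_mapZ a A : N (a *: A) = a *: N A.
Proof. exact: linearZ. Qed.

Lemma linear_map_delta_expand A : N A = \sum_i \sum_j A i j *: N (E i j).
Proof.
rewrite {1}(matrix_sum_delta A) linear_sum; apply: eq_bigr => i _.
by rewrite linear_sum; apply: eq_bigr => j _; rewrite linearZ.
Qed.

End LinearMap.

Lemma linear_map_comp (f g : 'M[C]_d -> 'M[C]_d) :
  is_linear_map f -> is_linear_map g -> is_linear_map (f \o g).
Proof. by move=> linf ling a A B /=; rewrite ling linf. Qed.

Lemma linear_map_eq_on_delta (f g : 'M[C]_d -> 'M[C]_d) :
  is_linear_map f -> is_linear_map g ->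
  (forall i j, f (E i j) = g (E i j)) -> f =1 g.
Proof.
move=> linf ling fg A.
rewrite (linear_map_delta_expand linf) (linear_map_delta_expand ling).
by apply: eq_bigr => i _; apply: eq_bigr => j _; rewrite fg.
Qed.

Lemma mx_eq_scale_delta X i j :
  (forall a b, (a != i) || (b != j) -> X a b = 0) -> X = X i j *: E i j.
Proof.
move=> X0; apply/matrixP => a b; rewrite !mxE.
case: (eqVneq a i) => [->|ai]; case: (eqVneq b j) => [->|bj];
  by rewrite ?mulr1 ?mulr0 // X0 // ?ai ?bj ?orbT.
Qed.

Lemma unitary_conjE ph A a b :
  unitary_conj ph A a b = ph a * A a b * (ph b)^*.
Proof.
have adj_phase : adjmx (phase_unitary ph) = diag_mx (\row_k (ph k)^*).
  apply/matrixP => x y; rewrite !mxE.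
  by case: (eqVneq x y) => [->|_]; rewrite ?mulr1n ?mulr0n ?rmorph0.
by rewrite /unitary_conj adj_phase mul_mx_diag mul_diag_mx !mxE.
Qed.

Lemma unitary_conj_delta ph i j :
  unitary_conj ph (E i j) = (ph i * (ph j)^*) *: E i j.
Proof.
apply/matrixP => x y; rewrite unitary_conjE !mxE.
by case: (eqVneq x i) => [->|xi]; case: (eqVneq y j) => [->|yj] /=;
  rewrite ?mulr1 ?mulr0 ?mul0r.
Qed.

Lemma unitary_conj_linear ph : is_linear_map (unitary_conj ph).
Proof. by move=> a A B; apply/matrixP => x y; rewrite !(unitary_conjE, mxE); ring. Qed.

Lemma unitary_conj_cp ph : completely_positive (unitary_conj ph).
Proof.
move=> n X psdX v.
pose w p := \col_a ((ph a)^* * v p a 0).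
rewrite (_ : \sum_p _ = \sum_p \sum_q form (w p) (X p q) (w q)) ?psdX //.
apply: eq_bigr => p _; apply: eq_bigr => q _; rewrite !formE.
apply: eq_bigr => a _; apply: eq_bigr => b _.
by rewrite unitary_conjE !mxE rmorphM /= conjCK; ring.
Qed.

Lemma norm1_mul_conjC (z : C) : `|z| = 1 -> z * z^* = 1.
Proof. by move=> z1; rewrite -normCK z1 expr1n. Qed.

Section UnitPhases.
Variable ph : 'I_d -> C.
Hypothesis ph_unit : forall k, `|ph k| = 1.

Lemma unitary_conj_tp : trace_preserving (unitary_conj ph).
Proof.
move=> A; apply: eq_bigr => i _.
by rewrite unitary_conjE mulrAC norm1_mul_conjC // mul1r.
Qed.

Lemma unitary_conj_diag_delta k : unitary_conj ph (E k k) = E k k.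
Proof. by rewrite unitary_conj_delta norm1_mul_conjC // scale1r. Qed.

Lemma unitary_conj_basis_preserving : basis_preserving (unitary_conj ph).
Proof.
split; last exact: unitary_conj_diag_delta.
split; [exact: unitary_conj_linear | exact: unitary_conj_cp | exact: unitary_conj_tp].
Qed.

End UnitPhases.

Lemma real_multiples_eq0 (z : C) : (forall t, t * z \is Num.real) -> z = 0.
Proof.
move=> realz; have /CrealP := realz ('i * z^*).
rewrite !rmorphM /= conjCi conjCK => e.
have : 'i *+ 2 * (z * z^*) = 0.
  by rewrite -[RHS](subrr ('i * z^* * z)) -{2}e; ring.
by move/eqP; rewrite mulf_eq0 mulrn_eq0 (negbTE (neq0Ci C)) mul_conjC_eq0 => /eqP.
Qed.

Lemma ge0_real_affine_form_eq0 (c x : C) :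
  (forall t, 0 <= c + t^* * x + t * x^*) -> x = 0.
Proof.
move=> ge0f; apply/eqP; apply: contraT => x0.
have c0 : 0 <= c by have := ge0f 0; rewrite conjC0 !mul0r !addr0.
have xx0 : 0 < x * x^* *+ 2 by rewrite pmulrn_lgt0 // mul_conjC_gt0.
pose k := (c + 1) / (x * x^* *+ 2).
have k_real : k^* = k by apply/geC0_conj/divr_ge0; [rewrite addr_ge0|rewrite ltW].
have := ge0f (- (x * k)); rewrite rmorphN rmorphM /= k_real.
have -> : c + - (x^* * k) * x + - (x * k) * x^* = c - k * (x * x^* *+ 2).
  by rewrite mulr2n; ring.
by rewrite /k mulfVK ?gt_eqF // opprD addrA subrr add0r oppr_ge0 ler10.
Qed.

Lemma ge0_affine_form_eq0 (c x y : C) :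
  (forall t, 0 <= c + t^* * x + t * y) -> x = 0 /\ y = 0.
Proof.
move=> ge0f.
have c_real : c^* = c by have := geC0_conj (ge0f 0); rewrite conjC0 !mul0r !addr0.
have yE : y = x^*.
  apply/eqP; rewrite eq_sym -subr_eq0; apply/eqP/real_multiples_eq0 => t; apply/CrealP.
  have e : c + t * x^* + t^* * y^* = c + t^* * x + t * y.
    by have := geC0_conj (ge0f t); rewrite !rmorphD !rmorphM /= conjCK c_real.
  rewrite rmorphM rmorphB /= conjCK; apply/eqP; rewrite -subr_eq0; apply/eqP.
  transitivity ((c + t^* * x + t * y) - (c + t * x^* + t^* * y^*)); first by ring.
  by rewrite e subrr.
by subst y; rewrite (ge0_real_affine_form_eq0 ge0f) conjC0.
Qed.

Lemma block_psd_delta n (sel : 'I_n -> 'I_d) :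
  block_psd (fun p q => E (sel p) (sel q)).
Proof.
move=> v.
under eq_bigr => p _ do under eq_bigr => q _ do rewrite form_delta.
under eq_bigr => p _ do rewrite -mulr_sumr.
by rewrite -mulr_suml -rmorph_sum mulrC mul_conjC_ge0.
Qed.

Section BasisPreserving.
Variable B : 'M[C]_d -> 'M[C]_d.
Hypothesis bpB : basis_preserving B.

Lemma basis_preserving_form_ge0 i j a b (s t : C) :
  0 <= s^* * E i i a a * s + s^* * B (E i j) a b * t
       + t^* * B (E j i) b a * s + t^* * E j j b b * t.
Proof.
case: bpB => [[_ cpB _] B_delta].
(* Test the image under B of the positive block [E_ii E_ij; E_ji E_jj]
   against the vector (s e_a, t e_b). *)
pose sel (p : 'I_2) := if p == ord0 then i else j.
have := cpB 2 _ (block_psd_delta sel).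
move=> /(_ (fun p => if p == ord0 then s *: delta_mx a 0 else t *: delta_mx b 0)).
by rewrite !big_ord_recl !big_ord0 /= !addr0 !form_scaled_delta /sel /= !B_delta addrA.
Qed.

Lemma basis_preserving_offdiag i j : i != j -> B (E i j) = B (E i j) i j *: E i j.
Proof.
move=> ij; apply: mx_eq_scale_delta => a b /orP [ai|bj].
  have [] // := @ge0_affine_form_eq0 (E j j b b) (B (E i j) a b) (B (E j i) b a).
  move=> t; have := basis_preserving_form_ge0 i j a b t 1.
  rewrite [E i i a a]mxE (negbTE ai) mulr0 mul0r add0r conjC1 !mul1r !mulr1.
  by rewrite [B _ b a * t]mulrC addrC addrA.
have [] // := @ge0_affine_form_eq0 (E i i a a) (B (E j i) b a) (B (E i j) a b).
move=> t; have := basis_preserving_form_ge0 i j a b 1 t.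
rewrite [E j j b b]mxE (negbTE bj) andbF mulr0 mul0r addr0 conjC1 !mul1r !mulr1.
by rewrite [B _ a b * t]mulrC -addrA [t * _ + _]addrC addrA.
Qed.

Lemma basis_preserving_diag D : is_diag_mx D -> B D = D.
Proof.
move=> /is_diag_mxP D_diag; case: bpB => [[linB _ _] B_delta].
rewrite (linear_map_delta_expand linB) [RHS](matrix_sum_delta D).
apply: eq_bigr => a _; apply: eq_bigr => b _.
by case: (eqVneq a b) => [->|ab]; rewrite ?B_delta // D_diag // !scale0r.
Qed.

End BasisPreserving.

Lemma Ci_neq1 : 'i != 1 :> C.
Proof. by apply: contraNneq (nonRealCi C) => ->; rewrite rpred1. Qed.

Lemma Ci_neqN1 : 'i != -1 :> C.
Proof. by apply: contraNneq (nonRealCi C) => ->; rewrite rpredN rpred1. Qed.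

Lemma Ci_neqNCi : 'i != - 'i :> C.
Proof. by apply: contraNneq (nonRealCi C) => e; apply/CrealP; rewrite conjCi -e. Qed.

Definition phase_at (m k : 'I_d) : C := if k == m then 'i else 1.

Lemma phase_at_norm m k : `|phase_at m k| = 1.
Proof. by rewrite /phase_at; case: eqP => _; rewrite ?normCi ?normr1. Qed.

Lemma phase_at_ratio m a b : phase_at m a * (phase_at m b)^* =
  if a == m then (if b == m then 1 else 'i) else (if b == m then - 'i else 1).
Proof.
rewrite /phase_at; case: (a == m); case: (b == m);
  rewrite ?conjCi ?conjC1 ?mulr1 ?mul1r //.
by rewrite mulrN mulCii opprK.
Qed.

Section Covariant.
Variable M : 'M[C]_d -> 'M[C]_d.
Hypothesis covM : multiphase_covariant M.

Lemma covariant_delta_entry_eq0 ph i j a b : (forall k, `|ph k| = 1) ->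
  ph a * (ph b)^* != ph i * (ph j)^* -> M (E i j) a b = 0.
Proof.
case: covM => [[linM _ _] M_cov] ph_unit ne.
have := M_cov ph ph_unit (E i j).
rewrite unitary_conj_delta (linear_mapZ linM) => /matrixP /(_ a b).
rewrite unitary_conjE mxE => e.
have : (ph a * (ph b)^* - ph i * (ph j)^*) * M (E i j) a b = 0.
  by rewrite mulrBl -e; ring.
by move/eqP; rewrite mulf_eq0 subr_eq0 (negbTE ne) => /eqP.
Qed.

Lemma covariant_diag k : is_diag_mx (M (E k k)).
Proof.
apply/is_diag_mxP => a b ab; have {}ab : a != b := ab.
apply: (covariant_delta_entry_eq0 (phase_at_norm a)).
rewrite !phase_at_ratio eqxx [b == a]eq_sym (negbTE ab).
by case: (k == a); rewrite Ci_neq1.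
Qed.

Lemma covariant_offdiag i j : i != j -> M (E i j) = M (E i j) i j *: E i j.
Proof.
move=> ij; have ji : (j == i) = false by rewrite eq_sym (negbTE ij).
have row_eq0 a b : a != i -> M (E i j) a b = 0.
  move=> ai; apply: (covariant_delta_entry_eq0 (phase_at_norm i)).
  rewrite !phase_at_ratio eqxx (negbTE ai) ji.
  by case: (b == i); rewrite eq_sym ?Ci_neqNCi ?Ci_neq1.
apply: mx_eq_scale_delta => a b /orP [ai|bj]; first exact: row_eq0.
have [->|ai] := eqVneq a i; last exact: row_eq0.
apply: (covariant_delta_entry_eq0 (phase_at_norm j)).
by rewrite !phase_at_ratio eqxx (negbTE ij) (negbTE bj) eq_sym eqr_oppLR Ci_neqN1.
Qed.

End Covariant.

Lemma basis_preserving_covariant_commute (B M : 'M[C]_d -> 'M[C]_d) :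
  basis_preserving B -> multiphase_covariant M -> channels_commute M B.
Proof.
move=> bpB covM; have [[linB _ _] B_delta] := bpB; have [[linM _ _] _] := covM.
suff MB_BM : M \o B =1 B \o M by move=> A; exact: MB_BM.
apply: linear_map_eq_on_delta (linear_map_comp linM linB) (linear_map_comp linB linM) _.
move=> i j /=; have [<-|ij] := eqVneq i j.
  by rewrite B_delta (basis_preserving_diag bpB) // covariant_diag.
have B_ij := basis_preserving_offdiag bpB ij; have M_ij := covariant_offdiag covM ij.
set b := B (E i j) i j in B_ij *; set m := M (E i j) i j in M_ij *.
by rewrite B_ij M_ij (linear_mapZ linM) (linear_mapZ linB) B_ij M_ij !scalerA mulrC.
Qed.

Definition replace_channel (k : 'I_d) A : 'M[C]_d := \tr A *: E k k.

Lemma mxtrace_delta k : \tr (E k k) = 1.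
Proof.
rewrite /mxtrace (bigD1 k) //= big1 ?addr0 => [|x xk]; first by rewrite mxE !eqxx.
by rewrite mxE (negbTE xk).
Qed.

Lemma replace_channel_quantum k : quantum_channel (replace_channel k).
Proof.
split.
- by move=> a A B; rewrite /replace_channel mxtraceD mxtraceZ scalerDl scalerA.
- move=> n X psdX v; rewrite /replace_channel.
  under eq_bigr => p _ do under eq_bigr => q _ do
    rewrite formZ form_delta /mxtrace mulr_suml.
  under eq_bigr => p _ do rewrite exchange_big /=.
  rewrite exchange_big /=; apply: sumr_ge0 => l _.
  pose w p : 'cV[C]_d := v p k 0 *: delta_mx l 0.
  rewrite (_ : \sum_p _ = \sum_p \sum_q form (w p) (X p q) (w q)) ?psdX //.
  by apply: eq_bigr => p _; apply: eq_bigr => q _; rewrite form_scaled_delta; ring.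
- by move=> A; rewrite /replace_channel mxtraceZ mxtrace_delta mulr1.
Qed.

Lemma replace_channel_covariant k : multiphase_covariant (replace_channel k).
Proof.
split=> [|ph ph_unit A]; first exact: replace_channel_quantum.
rewrite /replace_channel (linear_mapZ (unitary_conj_linear ph)).
by rewrite unitary_conj_diag_delta // unitary_conj_tp.
Qed.

End Channels.

Theorem mainTheorem7 (C : numClosedFieldType) (d : nat) :
  (forall N : 'M[C]_d -> 'M[C]_d,
     commutant (@multiphase_covariant C d) N <-> basis_preserving N) /\
  (forall N : 'M[C]_d -> 'M[C]_d,
     commutant (@basis_preserving C d) N <-> multiphase_covariant N).
Proof.
split=> N; split.
- case=> chN N_comm; split=> // k; have [_ _ trN] := chN.
  have := N_comm _ (replace_channel_covariant C k) (delta_mx k k).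
  by rewrite /replace_channel trN mxtrace_delta scale1r.
- move=> bpN; split=> [|M covM]; first by case: bpN.
  exact: basis_preserving_covariant_commute.
- case=> chN N_comm; split=> // ph ph_unit.
  exact: N_comm (unitary_conj_basis_preserving ph_unit).
- move=> covN; split=> [|B bpB A]; first by case: covN.
  by rewrite (basis_preserving_covariant_commute bpB covN).
Qed.
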